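(* Let $T\in\mathbb R^{m\times n}$ be injective and satisfy the positive cone condition, $y\in\mathbb R^m$, and $\lambda>0$. Then there exists $\varepsilon\in(0,\lambda)$ such that $|x_\mu^i|\le|x_\lambda^i|$ for all $i\in I(\lambda)$ and all $\mu\in[\lambda-\varepsilon,\lambda]$.
   Context: For $\lambda>0$, $x_\lambda$ is the unique minimizer of $x\mapsto\frac{\lambda}{2}\|Tx-y\|_2^2+\|x\|_1$ on $\mathbb R^n$; $I(\lambda)=\{i:x_\lambda^i\ne0\}$. Positive cone condition: for every nonempty $J\subset\{1,\dots,n\}$, with $T^J$ the submatrix of columns indexed by $J$ and $S_J=((T^J)^TT^J)^{-1}$, one has $(S_J)_{i,i}-\sum_{j\ne i}|(S_J)_{i,j}|\ge0$ for all $i\in J$. *)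

From mathcomp Require Import all_boot all_order all_algebra.
From mathcomp Require Import reals.
Set Implicit Arguments. Unset Strict Implicit. Unset Printing Implicit Defensive.
Import Order.TTheory GRing.Theory Num.Theory.
Local Open Scope ring_scope.

Definition lasso_obj (R : realType) (m n : nat) (T : 'M[R]_(m, n))
  (y : 'cV[R]_m) (lam : R) (x : 'cV[R]_n) : R :=
  lam / 2 * (\sum_(k < m) ((T *m x - y) k 0) ^+ 2) + \sum_(i < n) `|x i 0|.

Definition is_lasso_minimizer (R : realType) (m n : nat) (T : 'M[R]_(m, n))
  (y : 'cV[R]_m) (lam : R) (x : 'cV[R]_n) : Prop :=
  forall z : 'cV[R]_n, lasso_obj T y lam x <= lasso_obj T y lam z.

Definition supp (R : realType) (n : nat) (x : 'cV[R]_n) : {set 'I_n} :=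
  [set i | x i 0 != 0].

Definition colsubJ (R : realType) (m n : nat) (T : 'M[R]_(m, n))
  (J : {set 'I_n}) : 'M[R]_(m, #|J|) :=
  colsub (fun k : 'I_#|J| => enum_val k) T.

Definition S_J (R : realType) (m n : nat) (T : 'M[R]_(m, n))
  (J : {set 'I_n}) : 'M[R]_#|J| :=
  invmx ((colsubJ T J)^T *m colsubJ T J).

(* Positive cone condition: diagonal dominance of S_J for all nonempty J. *)
Definition positive_cone_condition (R : realType) (m n : nat)
  (T : 'M[R]_(m, n)) : Prop :=
  forall J : {set 'I_n}, J != set0 ->
    forall i : 'I_#|J|,
      0 <= S_J T J i i - \sum_(j < #|J| | j != i) `|S_J T J i j|.

From mathcomp Require Import all_boot all_order all_algebra.
From mathcomp Require Import reals.
From mathcomp Require Import ring lra.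
Import Order.TTheory GRing.Theory Num.Theory.
Set Implicit Arguments. Unset Strict Implicit. Unset Printing Implicit Defensive.
Local Open Scope ring_scope.

(* For lam > 0 let x_lam be the LASSO minimizer, J = I(lam) its support, s the
   vector of its signs and c(x) = T^T (y - T x).
   1. Optimality.  x minimizes the objective with parameter mu iff the KKT
      conditions |mu c_j(x)| <= 1 and mu c_j(x) x_j = |x_j| hold: necessity by
      one-coordinate perturbations, sufficiency (with uniqueness, T being
      injective) from the exact expansion of the objective.
   2. Restricted normal equations.  d = path_dir x_lam is the vector supported
      on J with (T^T T d)_J = s_J, i.e. the zero-padding of S_J s_J.  The positive
      cone condition gives s_i d_i >= 0 on J and |(T^T T d)_i| <= 1 off J (the
      latter by applying the condition to J + {i}).
   3. The path.  For 1/mu = 1/lam + h with 0 <= h small enough that x_lam - h d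
      keeps the signs of x_lam on J, the vector x_lam - h d satisfies the KKT
      conditions at mu, hence equals x_mu; and |x_lam^i - h d_i| <= |x_lam^i|
      because s_i d_i >= 0.  Translating "h small" into mu in [lam - eps, lam]
      proves the theorem. *)

Lemma slope_ge0 (R : realFieldType) (b c rho : R) :
  0 < rho -> 0 <= b ->
  (forall tau, 0 < tau -> tau <= rho -> 0 <= b * tau ^+ 2 + c * tau) -> 0 <= c.
Proof.
move=> rho0 b0 quad_ge0; rewrite leNgt; apply/negP => c0.
set D := - c + rho * b + rho.
have D0 : 0 < D by rewrite /D; nra.
set tau := rho * - c / D.
have tauD : tau * D = rho * - c by rewrite /tau divfK // gt_eqF.
have tau0 : 0 < tau by rewrite /tau divr_gt0 // mulr_gt0 // oppr_gt0.
have tau_rho : tau <= rho by rewrite /tau ler_pdivrMr // /D; nra.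
have eD : (b * tau + c) * D = c * (rho - c) by rewrite mulrDl -mulrA tauD /D; ring.
have neg : b * tau + c < 0 by nra.
have := quad_ge0 tau tau0 tau_rho; nra.
Qed.

Section InnerProduct.
Variable R : realFieldType.

Definition inner (p : nat) (a b : 'cV[R]_p) : R := (a^T *m b) 0 0.

Lemma innerE (p : nat) (a b : 'cV[R]_p) : inner a b = \sum_k a k 0 * b k 0.
Proof. by rewrite /inner mxE; apply: eq_bigr => k _; rewrite mxE. Qed.

Lemma inner_sym (p : nat) (a b : 'cV[R]_p) : inner a b = inner b a.
Proof. by rewrite !innerE; apply: eq_bigr => k _; rewrite mulrC. Qed.

Lemma innerZl (p : nat) (t : R) (a b : 'cV[R]_p) : inner (t *: a) b = t * inner a b.
Proof. by rewrite !innerE mulr_sumr; apply: eq_bigr => k _; rewrite mxE mulrA. Qed.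

Lemma inner_adj (m n : nat) (T : 'M[R]_(m, n)) (u : 'cV[R]_n) (b : 'cV[R]_m) :
  inner (T *m u) b = inner u (T^T *m b).
Proof. by rewrite /inner trmx_mul mulmxA. Qed.

Lemma inner_gram_sym (m n : nat) (T : 'M[R]_(m, n)) (u w : 'cV[R]_n) :
  inner u (T^T *m T *m w) = inner w (T^T *m T *m u).
Proof. by rewrite -!mulmxA -!inner_adj inner_sym. Qed.

Lemma inner_ge0 (p : nat) (a : 'cV[R]_p) : 0 <= inner a a.
Proof. by rewrite innerE; apply: sumr_ge0 => k _; rewrite -expr2 sqr_ge0. Qed.

Lemma inner_eq0 (p : nat) (a : 'cV[R]_p) : inner a a = 0 -> a = 0.
Proof.
rewrite innerE => a0; apply/matrixP => k j; rewrite (ord1 j) mxE.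
have sq_ge0 (i : 'I_p) : predT i -> 0 <= a i 0 * a i 0.
  by move=> _; rewrite -expr2 sqr_ge0.
by move/eqP: (psumr_eq0P sq_ge0 a0 (i := k) isT); rewrite mulf_eq0 orbb => /eqP.
Qed.

Lemma delta_colE (n : nat) (i j : 'I_n) : (delta_mx i 0 : 'cV[R]_n) j 0 = (j == i)%:R.
Proof. by rewrite mxE andbT. Qed.

Lemma inner_delta (n : nat) (i : 'I_n) (b : 'cV[R]_n) : inner (delta_mx i 0) b = b i 0.
Proof. by rewrite /inner trmx_delta -rowE mxE. Qed.

Lemma inner_supp (n : nat) (J : {set 'I_n}) (u w z : 'cV[R]_n) :
  (forall j, j \notin J -> u j 0 = 0) -> (forall j, j \in J -> w j 0 = z j 0) ->
  inner u w = inner u z.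
Proof.
move=> u0 wz; rewrite !innerE; apply: eq_bigr => j _.
by case: (boolP (j \in J)) => jJ; [rewrite wz | rewrite u0 ?mul0r].
Qed.

Lemma subr_scaleE (p : nat) (a b : 'cV[R]_p) (t : R) (k : 'I_p) :
  (a - t *: b) k 0 = a k 0 - t * b k 0.
Proof. by rewrite !mxE. Qed.

End InnerProduct.

Section LassoOptimality.
Variables (R : realType) (m n : nat) (T : 'M[R]_(m, n)) (y : 'cV[R]_m).

(* Correlation of the residual with the columns of T, i.e. minus the gradient of
   the least-squares part of the objective. *)
Definition corr (x : 'cV[R]_n) : 'cV[R]_n := T^T *m (y - T *m x).

(* KKT conditions: mu * corr x is a subgradient of the l1-norm at x. *)
Definition lasso_KKT (mu : R) (x : 'cV[R]_n) : Prop :=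
  forall j, `|mu * corr x j 0| <= 1 /\ mu * corr x j 0 * x j 0 = `|x j 0|.

Lemma lasso_obj_diff (mu : R) (x z : 'cV[R]_n) :
  lasso_obj T y mu z - lasso_obj T y mu x =
  mu / 2 * inner (T *m (z - x)) (T *m (z - x))
  + \sum_j (`|z j 0| - `|x j 0| - mu * corr x j 0 * (z - x) j 0).
Proof.
have sumsq (a : 'cV[R]_m) : \sum_k (a k 0) ^+ 2 = inner a a.
  by rewrite innerE; apply: eq_bigr => k _; rewrite expr2.
rewrite /lasso_obj !sumsq.
have -> : T *m z - y = T *m (z - x) + (T *m x - y) by rewrite mulmxBr addrA subrK.
have -> : \sum_j (`|z j 0| - `|x j 0| - mu * corr x j 0 * (z - x) j 0)
    = \sum_j `|z j 0| - \sum_j `|x j 0| + mu * inner (T *m (z - x)) (T *m x - y).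
  rewrite !sumrB inner_adj innerE mulr_sumr; congr (_ + _).
  rewrite -sumrN; apply: eq_bigr => k _.
  rewrite /corr -[T *m x - y]opprB mulmxN [X in _ * (_ * X)]mxE; ring.
set a := T *m (z - x); set b := T *m x - y.
have -> : inner (a + b) (a + b) = inner a a + 2 * inner a b + inner b b.
  rewrite !innerE mulr_sumr -!big_split; apply: eq_bigr => k _.
  rewrite [(a + b) k 0]mxE /=; ring.
by field.
Qed.

Lemma KKT_obj_gap (mu : R) (x z : 'cV[R]_n) : lasso_KKT mu x ->
  mu / 2 * inner (T *m (z - x)) (T *m (z - x))
    <= lasso_obj T y mu z - lasso_obj T y mu x.
Proof.
move=> K; rewrite lasso_obj_diff lerDl; apply: sumr_ge0 => j _.
have [Kbound Ksign] := K j.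
rewrite [(z - x) j 0]mxE [(- x) j 0]mxE mulrDr -Ksign mulrN opprD opprK addrA.
rewrite addrAC subrK subr_ge0.
apply: (le_trans (ler_norm _)); rewrite normrM.
by rewrite -[X in _ <= X]mul1r ler_wpM2r.
Qed.

Lemma KKT_minimizer_unique (mu : R) (x z : 'cV[R]_n) :
  injective (fun v : 'cV[R]_n => T *m v) -> 0 < mu -> lasso_KKT mu x ->
  is_lasso_minimizer T y mu z -> z = x.
Proof.
move=> Tinj mu0 K zmin.
have gap := KKT_obj_gap z K; have opt := zmin x.
have q_ge0 := inner_ge0 (T *m (z - x)).
have q0 : inner (T *m (z - x)) (T *m (z - x)) = 0.
  apply/eqP; rewrite eq_le q_ge0 andbT.
  by rewrite -(pmulr_rle0 _ (divr_gt0 mu0 (ltr0Sn _ 1))); lra.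
by move/inner_eq0: q0; rewrite mulmxBr => /eqP; rewrite subr_eq0 => /eqP /Tinj.
Qed.

Lemma minimizer_perturb (mu : R) (x : 'cV[R]_n) (j : 'I_n) (t : R) :
  is_lasso_minimizer T y mu x ->
  0 <= mu / 2 * inner (T *m delta_mx j 0) (T *m delta_mx j 0) * t ^+ 2
       - mu * corr x j 0 * t + (`|x j 0 + t| - `|x j 0|).
Proof.
move=> xmin; have := xmin (x + t *: delta_mx j 0); rewrite -subr_ge0 lasso_obj_diff.
rewrite addrAC subrr add0r -scalemxAr innerZl inner_sym innerZl mulrA -expr2.
rewrite (bigD1 j) //= big1 ?addr0.
  by rewrite !mxE eqxx mulr1; lra.
by move=> k /negPf kj; rewrite !mxE kj mulr0 addr0 subrr; lra.
Qed.

(* Necessary condition on all coordinates: |mu * corr x j| <= 1, from the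
   perturbations x +- tau e_j. *)
Lemma minimizer_corr_bound (mu : R) (x : 'cV[R]_n) (j : 'I_n) :
  0 < mu -> is_lasso_minimizer T y mu x -> `|mu * corr x j 0| <= 1.
Proof.
move=> mu0 xmin; pose a := mu / 2 * inner (T *m delta_mx j 0) (T *m delta_mx j 0).
have a0 : 0 <= a by rewrite mulr_ge0 ?inner_ge0 // divr_ge0 // ltW.
have slope (s : R) : s ^+ 2 = 1 -> 0 <= 1 - s * (mu * corr x j 0).
  move=> s2; apply: (slope_ge0 ltr01 a0) => tau tau0 _.
  have := minimizer_perturb j (s * tau) xmin; rewrite -/a exprMn s2 mul1r.
  have : `|x j 0 + s * tau| - `|x j 0| <= tau.
    have s1 : `|s| = 1 by apply/eqP; rewrite -sqr_norm_eq1 s2.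
    apply: le_trans (lerB_dist _ _) _; rewrite addrAC subrr add0r normrM s1.
    by rewrite mul1r ger0_norm // ltW.
  nra.
have := slope 1 (expr1n _ _); have := slope (-1) (etrans (sqrrN 1) (expr1n _ _)).
by rewrite ler_norml; lra.
Qed.

(* Necessary condition on the support: mu * corr x j = sign(x j), from the
   perturbations shrinking x j towards 0. *)
Lemma minimizer_corr_sign (mu : R) (x : 'cV[R]_n) (j : 'I_n) :
  0 < mu -> is_lasso_minimizer T y mu x -> x j 0 != 0 ->
  mu * corr x j 0 = Num.sg (x j 0).
Proof.
move=> mu0 xmin xj0; set s := Num.sg (x j 0).
pose a := mu / 2 * inner (T *m delta_mx j 0) (T *m delta_mx j 0).
have a0 : 0 <= a by rewrite mulr_ge0 ?inner_ge0 // divr_ge0 // ltW.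
have s2 : s ^+ 2 = 1 by rewrite /s sqr_sg xj0.
have ge1 : 0 <= s * (mu * corr x j 0) - 1.
  have xpos : 0 < `|x j 0| by rewrite normr_gt0.
  apply: (slope_ge0 xpos a0) => tau tau0 tau_x.
  have := minimizer_perturb j (- (s * tau)) xmin; rewrite -/a sqrrN exprMn s2 mul1r.
  have -> : x j 0 + - (s * tau) = s * (`|x j 0| - tau).
    by rewrite mulrBr /s mulr_sg_norm.
  rewrite normrM /s normr_sg xj0 mul1r ger0_norm ?subr_ge0 //.
  nra.
have le1 : s * (mu * corr x j 0) <= 1.
  apply: le_trans (ler_norm _) _; rewrite normrM /s normr_sg xj0 mul1r.
  exact: minimizer_corr_bound.
have -> : mu * corr x j 0 = s * (s * (mu * corr x j 0)).
  by rewrite mulrA -expr2 s2 mul1r.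
have -> : s * (mu * corr x j 0) = 1 by lra.
by rewrite mulr1.
Qed.

End LassoOptimality.

Section RestrictedNormalEquations.
Variables (R : realType) (m n : nat) (T : 'M[R]_(m, n)).
Hypothesis Tinj : injective (fun v : 'cV[R]_n => T *m v).

Definition padJ (J : {set 'I_n}) : 'M[R]_(n, #|J|) :=
  colsub (fun k : 'I_#|J| => enum_val k) 1%:M.

Lemma colsubJE (J : {set 'I_n}) : colsubJ T J = T *m padJ J.
Proof. by rewrite /colsubJ /padJ mulmx_colsub mulmx1. Qed.

Lemma padJ_val (J : {set 'I_n}) (u : 'cV[R]_#|J|) (l : 'I_#|J|) :
  (padJ J *m u) (enum_val l) 0 = u l 0.
Proof.
rewrite mxE (bigD1 l) //= big1 ?mxE ?eqxx ?mul1r ?addr0 //.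
by move=> k kl; rewrite !mxE (inj_eq enum_val_inj) eq_sym (negPf kl) mul0r.
Qed.

Lemma padJ_out (J : {set 'I_n}) (u : 'cV[R]_#|J|) (j : 'I_n) :
  j \notin J -> (padJ J *m u) j 0 = 0.
Proof.
move=> jJ; rewrite mxE big1 // => k _; rewrite !mxE.
by case: eqP => [e|]; [move: (enum_valP k); rewrite -e (negPf jJ) | rewrite mul0r].
Qed.

Lemma padJ_tr (J : {set 'I_n}) (w : 'cV[R]_n) (l : 'I_#|J|) :
  ((padJ J)^T *m w) l 0 = w (enum_val l) 0.
Proof.
rewrite mxE (bigD1 (enum_val l)) //= big1 ?mxE ?eqxx ?mul1r ?addr0 //.
by move=> k /negPf kl; rewrite !mxE kl mul0r.
Qed.

Lemma padJ_trK (J : {set 'I_n}) : (padJ J)^T *m padJ J = 1%:M.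
Proof.
apply/matrixP => l l'; rewrite !mxE (bigD1 (enum_val l)) //= big1.
  by rewrite !mxE eqxx mul1r addr0 (inj_eq enum_val_inj).
by move=> k /negPf kl; rewrite !mxE kl mul0r.
Qed.

Lemma gramJ_unit (J : {set 'I_n}) : (colsubJ T J)^T *m colsubJ T J \in unitmx.
Proof.
rewrite unitmxE unitfE; apply/negP => /det0P [v v0].
rewrite colsubJE; set w := padJ J *m v^T => vG.
have : inner (T *m w) (T *m w) = 0.
  rewrite /inner /w !trmx_mul trmxK.
  have -> : v *m (padJ J)^T *m T^T *m (T *m (padJ J *m v^T))
     = v *m ((T *m padJ J)^T *m (T *m padJ J)) *m v^T by rewrite trmx_mul !mulmxA.
  by rewrite vG mul0mx mxE.
move=> /inner_eq0; rewrite -(mulmx0 _ T) => /Tinj w0.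
have : v^T = 0 by rewrite -[v^T]mul1mx -(padJ_trK J) -mulmxA -/w w0 mulmx0.
by move/eqP; rewrite -trmx0 (inj_eq (@trmx_inj _ _ _)) (negPf v0).
Qed.

(* solJ J r is the vector supported on J whose Gram image agrees with r on J:
   the solution of the normal equations restricted to the columns in J. *)
Definition solJ (J : {set 'I_n}) (r : 'cV[R]_n) : 'cV[R]_n :=
  padJ J *m (S_J T J *m ((padJ J)^T *m r)).

Lemma solJ_out (J : {set 'I_n}) (r : 'cV[R]_n) (j : 'I_n) :
  j \notin J -> solJ J r j 0 = 0.
Proof. exact: padJ_out. Qed.

Lemma solJ_eq (J : {set 'I_n}) (r : 'cV[R]_n) (j : 'I_n) :
  j \in J -> (T^T *m T *m solJ J r) j 0 = r j 0.
Proof.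
move=> jJ; rewrite -(enum_rankK_in jJ jJ) -!padJ_tr /solJ.
have -> : (padJ J)^T *m (T^T *m T *m (padJ J *m (S_J T J *m ((padJ J)^T *m r))))
  = ((colsubJ T J)^T *m colsubJ T J *m S_J T J) *m ((padJ J)^T *m r).
  by rewrite colsubJE trmx_mul !mulmxA.
by rewrite /S_J mulmxV ?mul1mx // gramJ_unit.
Qed.

Lemma solJ_inner (J : {set 'I_n}) (u r : 'cV[R]_n) :
  (forall j, j \notin J -> u j 0 = 0) ->
  inner u (T^T *m T *m solJ J r) = inner u r.
Proof. by move=> u0; apply: (inner_supp u0) => j; apply: solJ_eq. Qed.

Lemma S_J_sym (J : {set 'I_n}) (k l : 'I_#|J|) : S_J T J k l = S_J T J l k.
Proof.
have : (S_J T J)^T = S_J T J by rewrite /S_J trmx_inv trmx_mul trmxK.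
by move/matrixP => /(_ l k); rewrite mxE.
Qed.

Lemma solJ_delta (J : {set 'I_n}) (i : 'I_n) (iJ : i \in J) (l : 'I_#|J|) :
  solJ J (delta_mx i 0) (enum_val l) 0 = S_J T J (enum_rank_in iJ i) l.
Proof.
rewrite /solJ padJ_val mxE (bigD1 (enum_rank_in iJ i)) //= big1.
  by rewrite padJ_tr delta_colE (enum_rankK_in iJ iJ) eqxx mulr1 addr0 S_J_sym.
move=> k ki; rewrite padJ_tr delta_colE.
case: eqP => [e|]; last by rewrite mulr0.
by case/negP: ki; apply/eqP/enum_val_inj; rewrite e (enum_rankK_in iJ iJ).
Qed.

Hypothesis PCC : positive_cone_condition T.

Lemma solJ_delta_dom (J : {set 'I_n}) (i : 'I_n) : i \in J ->
  \sum_(j | j != i) `|solJ J (delta_mx i 0) j 0| <= solJ J (delta_mx i 0) i 0.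
Proof.
move=> iJ.
have J0 : J != set0 by apply/set0Pn; exists i.
set l0 := enum_rank_in iJ i.
have i_l0 : enum_val l0 = i := enum_rankK_in iJ iJ.
have -> : solJ J (delta_mx i 0) i 0 = S_J T J l0 l0.
  by rewrite -(solJ_delta iJ l0) i_l0.
suff -> : \sum_(j | j != i) `|solJ J (delta_mx i 0) j 0|
        = \sum_(l < #|J| | l != l0) `|S_J T J l0 l|.
  by rewrite -subr_ge0; apply: PCC.
rewrite (bigID (fun j => j \in J)) /= [X in _ + X]big1; last first.
  by move=> j /andP [_ jJ]; rewrite solJ_out ?normr0.
rewrite addr0 (eq_bigl (fun j => (j \in J) && (j != i))); last by move=> j; rewrite andbC.
rewrite big_enum_val_cond /=; apply: eq_big => [l|l _]; last by rewrite solJ_delta.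
by rewrite -i_l0 (inj_eq enum_val_inj).
Qed.

(* The diagonal entry is positive: (solJ K e_i)_i = |T (solJ K e_i)|^2 > 0. *)
Lemma solJ_delta_pos (K : {set 'I_n}) (i : 'I_n) :
  i \in K -> 0 < solJ K (delta_mx i 0) i 0.
Proof.
move=> iK; set v := solJ K (delta_mx i 0).
have Tv2 : inner (T *m v) (T *m v) = v i 0.
  rewrite inner_adj mulmxA /v solJ_inner; first by rewrite inner_sym inner_delta.
  exact: solJ_out.
rewrite lt_def -Tv2 inner_ge0 andbT; apply/eqP => /inner_eq0 Tv0.
have v0 : v = 0 by apply: Tinj; rewrite /= Tv0 mulmx0.
have := solJ_eq (delta_mx i 0) iK; rewrite -/v v0 mulmx0 mxE delta_colE eqxx.
by move/eqP; rewrite eq_sym oner_eq0.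
Qed.

Lemma solJ_sign (J : {set 'I_n}) (s : 'cV[R]_n) (i : 'I_n) :
  (forall j, j \in J -> `|s j 0| = 1) -> i \in J -> 0 <= s i 0 * solJ J s i 0.
Proof.
move=> s1 iJ; set v := solJ J (delta_mx i 0); set d := solJ J s.
have d_v : d i 0 = inner v s.
  rewrite -(inner_delta i d) inner_sym -(@solJ_inner J d (delta_mx i 0)).
    by rewrite inner_gram_sym /d solJ_inner //; apply: solJ_out.
  exact: solJ_out.
have ss : s i 0 * (v i 0 * s i 0) = v i 0.
  by rewrite mulrCA -expr2 -real_normK ?num_real // s1 // expr1n mulr1.
have off_diag : - \sum_(j | j != i) `|v j 0|
    <= \sum_(j | j != i) s i 0 * (v j 0 * s j 0).
  rewrite -sumrN; apply: ler_sum => j _; rewrite lerNl.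
  case: (boolP (j \in J)) => jJ; last by rewrite solJ_out // mul0r mulr0 oppr0 normr0.
  by apply: le_trans (ler_norm _) _; rewrite normrN !normrM !s1 // mul1r mulr1.
have dom := solJ_delta_dom iJ; rewrite -/v in dom.
by rewrite d_v innerE (bigD1 i) //= mulrDr ss mulr_sumr; lra.
Qed.

(* Second sign property: if |s| <= 1 on J, the Gram image of the solution stays
   in [-1, 1] outside J.  This is the positive cone condition on J + {i}. *)
Lemma solJ_gram_bound (J : {set 'I_n}) (s : 'cV[R]_n) (i : 'I_n) :
  (forall j, j \in J -> `|s j 0| <= 1) -> i \notin J ->
  `|(T^T *m T *m solJ J s) i 0| <= 1.
Proof.
move=> s1 iJ; set K := i |: J.
have iK : i \in K by rewrite setU11.
set v := solJ K (delta_mx i 0); set d := solJ J s; set w := T^T *m T *m d.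
have supp_d (j : 'I_n) : j \notin K -> d j 0 = 0.
  by rewrite in_setU1 negb_or => /andP [_ jJ]; apply: solJ_out.
have vw : inner v w = 0.
  rewrite inner_gram_sym solJ_inner // inner_sym inner_delta.
  exact: solJ_out.
have off_diag : `|\sum_(j | j != i) v j 0 * w j 0| <= \sum_(j | j != i) `|v j 0|.
  apply: le_trans (ler_norm_sum _ _ _) _; apply: ler_sum => j ji.
  case: (boolP (j \in J)) => jJ.
    by rewrite normrM -[X in _ <= X]mulr1 ler_wpM2l // /w /d solJ_eq // s1.
  have jK : j \notin K by rewrite in_setU1 negb_or ji.
  by rewrite /v solJ_out // mul0r normr0.
have vi0 := solJ_delta_pos iK; have dom := solJ_delta_dom iK; rewrite -/v in vi0 dom.
have vwi : v i 0 * w i 0 = - \sum_(j | j != i) v j 0 * w j 0.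
  by apply/eqP; rewrite -addr_eq0; move: vw; rewrite innerE (bigD1 i) //= => ->.
have : v i 0 * `|w i 0| <= v i 0 * 1.
  rewrite mulr1 -(gtr0_norm vi0) -normrM vwi normrN (gtr0_norm vi0).
  exact: le_trans off_diag dom.
by rewrite ler_pM2l.
Qed.

End RestrictedNormalEquations.

Lemma shrink_coord (R : realFieldType) (a d h : R) :
  a != 0 -> 0 <= h -> 0 <= Num.sg a * d -> h * `|d| <= `|a| ->
  Num.sg a * (a - h * d) = `|a - h * d| /\ `|a - h * d| <= `|a|.
Proof.
move=> a0 h0 ad hd.
have sa1 : `|Num.sg a| = 1 by rewrite normr_sg a0.
have e : Num.sg a * (a - h * d) = `|a| - h * (Num.sg a * d).
  by rewrite mulrBr -normrEsg mulrCA.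
have le_hd : h * (Num.sg a * d) <= h * `|d|.
  by rewrite ler_wpM2l // (le_trans (ler_norm _)) // normrM sa1 mul1r.
have hsd0 : 0 <= h * (Num.sg a * d) by rewrite mulr_ge0.
have norm_e : `|a - h * d| = Num.sg a * (a - h * d).
  by rewrite -[LHS]mul1r -sa1 -normrM ger0_norm // e; lra.
by rewrite norm_e e; split => //; lra.
Qed.

Lemma exists_step (R : realFieldType) (n : nat) (a d : 'cV[R]_n) :
  exists2 del : R, 0 < del & forall j, a j 0 != 0 -> del * `|d j 0| <= `|a j 0|.
Proof.
set Q := 1 + \sum_j `|d j 0| / `|a j 0|.
have ratio_ge0 (j : 'I_n) : 0 <= `|d j 0| / `|a j 0| by rewrite divr_ge0.
have Q0 : 0 < Q by rewrite /Q ltr_wpDr ?ltr01 // sumr_ge0.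
exists Q^-1; first by rewrite invr_gt0.
move=> j aj0; rewrite mulrC -ler_pdivlMr ?invr_gt0 // invrK mulrC.
rewrite -ler_pdivrMr ?normr_gt0 // /Q (bigD1 j) //= addrCA ler_wpDr //.
by rewrite addr_ge0 // sumr_ge0.
Qed.

Lemma inv_gap_interval (R : realFieldType) (lam del : R) : 0 < lam -> 0 < del ->
  exists eps : R, 0 < eps < lam /\
    forall mu, lam - eps <= mu <= lam -> 0 < mu /\ 0 <= mu^-1 - lam^-1 <= del.
Proof.
move=> lam0 del0; set mu0 := lam / (1 + lam * del).
have D0 : 0 < 1 + lam * del by rewrite ltr_wpDr ?ltr01 // mulr_ge0 ?ltW.
have mu0_pos : 0 < mu0 by rewrite divr_gt0.
have mu0_lt : mu0 < lam by rewrite ltr_pdivrMr // ltr_pMr // ltrDl mulr_gt0.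
exists (lam - mu0); split; first by apply/andP; split; lra.
move=> mu /andP [lo hi]; have mu_pos : 0 < mu by lra.
split => //; apply/andP; split; first by rewrite subr_ge0 lef_pV2.
have inv_mu0 : mu0^-1 = lam^-1 + del by rewrite /mu0 invf_div; field; rewrite gt_eqF.
by rewrite lerBlDl -inv_mu0 lef_pV2 ?posrE //; lra.
Qed.

Section LassoPath.
Variables (R : realType) (m n : nat) (T : 'M[R]_(m, n)) (y : 'cV[R]_m).
Hypothesis Tinj : injective (fun v : 'cV[R]_n => T *m v).
Hypothesis PCC : positive_cone_condition T.

Definition sign_vec (x : 'cV[R]_n) : 'cV[R]_n := \col_j Num.sg (x j 0).

Definition path_dir (x : 'cV[R]_n) : 'cV[R]_n := solJ T (supp x) (sign_vec x).

Lemma path_dir_sign (x : 'cV[R]_n) (j : 'I_n) :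
  j \in supp x -> 0 <= Num.sg (x j 0) * path_dir x j 0.
Proof.
move=> jJ; have := solJ_sign Tinj PCC (s := sign_vec x) _ jJ; rewrite mxE; apply.
by move=> k; rewrite inE mxE normr_sg => ->.
Qed.

Lemma path_dir_gram_bound (x : 'cV[R]_n) (j : 'I_n) :
  j \notin supp x -> `|(T^T *m T *m path_dir x) j 0| <= 1.
Proof.
apply: solJ_gram_bound => // k _.
by rewrite mxE normr_sg; case: (_ != 0).
Qed.

Lemma corr_shift (x d : 'cV[R]_n) (h : R) :
  corr T y (x - h *: d) = corr T y x + h *: (T^T *m T *m d).
Proof.
rewrite /corr [T *m (x - _)]mulmxBr -scalemxAr opprD opprK addrA.
by rewrite mulmxDr -scalemxAr mulmxA.
Qed.
Lemma KKT_path (lam mu : R) (x0 : 'cV[R]_n) :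
  0 < lam -> 0 < mu <= lam -> is_lasso_minimizer T y lam x0 ->
  (forall j, j \in supp x0 -> (mu^-1 - lam^-1) * `|path_dir x0 j 0| <= `|x0 j 0|) ->
  lasso_KKT T y mu (x0 - (mu^-1 - lam^-1) *: path_dir x0).
Proof.
move=> lam0 /andP [mu0 mu_lam] x0min step j.
set h := mu^-1 - lam^-1; set d := path_dir x0.
have h0 : 0 <= h by rewrite subr_ge0 lef_pV2.
rewrite corr_shift subr_scaleE [X in mu * X]mxE [X in _ + X]mxE.
set c := corr T y x0 j 0; set g := (T^T *m T *m d) j 0.
case: (boolP (j \in supp x0)) => jJ.
  have x0j : x0 j 0 != 0 by rewrite inE in jJ.
  have lam_c : lam * c = Num.sg (x0 j 0) := minimizer_corr_sign lam0 x0min x0j.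
  have -> : mu * (c + h * g) = Num.sg (x0 j 0).
    rewrite /g /d /path_dir solJ_eq // mxE -lam_c /h.
    by field; rewrite !gt_eqF.
  rewrite normr_sg x0j; split => //.
  by have [] := shrink_coord x0j h0 (path_dir_sign jJ) (step j jJ).
have x0j : x0 j 0 = 0 by apply/eqP; move: jJ; rewrite inE negbK.
rewrite x0j /d /path_dir solJ_out // mulr0 subrr mulr0 normr0; split => //.
have c_le : `|c| <= lam^-1.
  rewrite -[lam^-1]mulr1 ler_pdivlMl //.
  by have := minimizer_corr_bound j lam0 x0min; rewrite normrM gtr0_norm.
have g_le : `|g| <= 1 := path_dir_gram_bound jJ.
have mu_e : mu * (lam^-1 + h) = 1 by rewrite /h addrC subrK mulfV // gt_eqF.
rewrite normrM gtr0_norm // -mu_e ler_pM2l //.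
apply: le_trans (ler_normD _ _) _; rewrite lerD // normrM ger0_norm //.
by rewrite -[X in _ <= X]mulr1 ler_wpM2l.
Qed.

End LassoPath.

Theorem mainTheorem17 (R : realType) (m n : nat) (T : 'M[R]_(m, n))
  (y : 'cV[R]_m) (lam : R) (x : R -> 'cV[R]_n) :
  injective (fun v : 'cV[R]_n => T *m v) ->
  positive_cone_condition T ->
  (forall mu : R, 0 < mu -> is_lasso_minimizer T y mu (x mu)) ->
  0 < lam ->
  exists eps : R, 0 < eps < lam /\
    forall i : 'I_n, i \in supp (x lam) ->
      forall mu : R, lam - eps <= mu <= lam ->
        `|x mu i 0| <= `|x lam i 0|.
Proof.
move=> Tinj PCC xmin lam0.
set x0 := x lam; set d := path_dir T x0.
have [del del0 step] := exists_step x0 d.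
have [eps [eps_range near]] := inv_gap_interval lam0 del0.
exists eps; split => // i iJ mu mu_range.
have [mu0 /andP [h0 h_del]] := near mu mu_range.
have step_h (j : 'I_n) : j \in supp x0 -> (mu^-1 - lam^-1) * `|d j 0| <= `|x0 j 0|.
  rewrite inE => x0j; apply: le_trans (step j x0j).
  by rewrite ler_wpM2r.
have mu_lam : 0 < mu <= lam by rewrite mu0; case/andP: mu_range.
have KKT_mu := KKT_path Tinj PCC lam0 mu_lam (xmin lam lam0) step_h.
have x0i : x0 i 0 != 0 by rewrite inE in iJ.
rewrite (KKT_minimizer_unique Tinj mu0 KKT_mu (xmin mu mu0)) subr_scaleE.
by have [] := shrink_coord x0i h0 (path_dir_sign Tinj PCC iJ) (step_h i iJ).
Qed.
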